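(* Let $f(w)=\frac1N\sum_{i=1}^N f_i(w)$ be a $\mu$-strongly convex function on $\mathbb{R}^d$ (i.e. $(x-y)^T(\nabla f(x)-\nabla f(y))\ge \mu\|x-y\|^2$ for all $x,y$) whose component gradients $\nabla f_i$ are all $L$-Lipschitz continuous, and let $w^*$ be its global minimizer. Let $(\delta,b)$ be a low-precision representation such that every coordinate of $w^*$ satisfies $-\delta\cdot 2^{b-1}\le (w^* )_j\le \delta\cdot(2^{b-1}-1)$. Then for any $w\in\mathbb{R}^d$, \[ \mathbb{E}\left[\|Q_{(\delta,b)}(w)-w^*\|^2\right]\le \|w-w^*\|^2+\frac{d\delta^2}{4}. \]
   Context: A low-precision representation is a pair $(\delta,b)$ with scale factor $\delta>0$ and number of bits $b\in\mathbb{N}$; the representable numbers are $\mathrm{dom}(\delta,b)=\{-\delta 2^{b-1},\dots,-\delta,0,\delta,\dots,\delta(2^{b-1}-1)\}$. The quantization function $Q_{(\delta,b)}$ acts on vectors componentwise and independently: for a scalar $x$ in the interval $[-\delta 2^{b-1},\delta(2^{b-1}-1)]$, letting $z$ be the largest element of $\mathrm{dom}(\delta,b)$ with $z\le x$, $Q_{(\delta,b)}(x)$ equals $z+\delta$ with probability $(x-z)/\delta$ and $z$ otherwise (so $\mathbb{E}[Q_{(\delta,b)}(x)]=x$); for $x$ outside that interval, $Q_{(\delta,b)}(x)$ is the closest element of $\mathrm{dom}(\delta,b)$ (the largest or smallest representable value). The expectation is over the randomness of the quantization. *)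

From HB Require Import structures.
From mathcomp Require Import all_boot all_order all_algebra.
From mathcomp Require Import all_classical all_reals all_analysis.
Set Implicit Arguments. Unset Strict Implicit. Unset Printing Implicit Defensive.
Import Order.TTheory GRing.Theory Num.Theory.
Import numFieldNormedType.Exports.
Local Open Scope ring_scope.

Section Defs.
Variable R : realType.

Definition dotv (d : nat) (x y : 'rV[R]_d) : R := \sum_(j < d) x 0 j * y 0 j.
Definition sqnorm (d : nat) (x : 'rV[R]_d) : R := dotv x x.
Definition enorm (d : nat) (x : 'rV[R]_d) : R := Num.sqrt (sqnorm x).

Definition grad (d : nat) (f : 'rV[R]_d -> R) (x : 'rV[R]_d) : 'rV[R]_d :=
  \row_(j < d) ('D_(delta_mx 0 j) f x).

Definition qmin (delta : R) (b : nat) : R := - (delta * 2 ^+ b.-1).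
Definition qmax (delta : R) (b : nat) : R := delta * (2 ^+ b.-1 - 1).

(* largest element z of dom(delta,b) with z <= x (for x in range) *)
Definition qfloor (delta : R) (x : R) : R := delta * (Num.floor (x / delta))%:~R.

Definition inrange (delta : R) (b : nat) (x : R) : bool :=
  (qmin delta b <= x) && (x <= qmax delta b).

(* the two possible outcomes of Q_(delta,b)(x): low (z) and high (z+delta);
   outside the range both are the nearest representable value *)
Definition qlow (delta : R) (b : nat) (x : R) : R :=
  if inrange delta b x then qfloor delta x
  else if x < qmin delta b then qmin delta b else qmax delta b.
Definition qhigh (delta : R) (b : nat) (x : R) : R :=
  if inrange delta b x then qfloor delta x + delta
  else if x < qmin delta b then qmin delta b else qmax delta b.
Definition qprob (delta : R) (b : nat) (x : R) : R :=
  if inrange delta b x then (x - qfloor delta x) / delta else 0.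

Definition qoutcome (delta : R) (b : nat) (d : nat) (w : 'rV[R]_d)
  (c : {ffun 'I_d -> bool}) : 'rV[R]_d :=
  \row_(j < d) (if c j then qhigh delta b (w 0 j) else qlow delta b (w 0 j)).

(* probability of the choices c (coordinates quantized independently) *)
Definition qweight (delta : R) (b : nat) (d : nat) (w : 'rV[R]_d)
  (c : {ffun 'I_d -> bool}) : R :=
  \prod_(j < d) (if c j then qprob delta b (w 0 j) else 1 - qprob delta b (w 0 j)).

Definition qexpect (delta : R) (b : nat) (d : nat) (w : 'rV[R]_d)
  (g : 'rV[R]_d -> R) : R :=
  \sum_(c : {ffun 'I_d -> bool}) qweight delta b w c * g (qoutcome delta b w c).

End Defs.

From HB Require Import structures.
From mathcomp Require Import all_boot all_order all_algebra.
From mathcomp Require Import all_classical all_reals all_analysis.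
From mathcomp Require Import ring lra.
Import Order.TTheory GRing.Theory Num.Theory.
Import numFieldNormedType.Exports.
Local Open Scope ring_scope.

(** The squared distance to [w*] is a sum over coordinates, and the
  coordinates are quantized independently, so the expectation splits into
  one-dimensional expectations.  In a coordinate where [w] is in range, the
  unbiased rounding of [x] between [z] and [z + delta] adds exactly its
  variance [(x - z) (z + delta - x) <= delta^2 / 4] to [(x - w*_j)^2]; out of
  range, the value is clamped to the nearest end of the range, which contains
  [w*_j], so the error can only decrease. *)

Lemma expect_sum_product (R : comPzSemiRingType) (I T : finType)
    (P F : I -> T -> R) :
  (forall i, \sum_(v : T) P i v = 1) ->
  \sum_(c : {ffun I -> T}) (\prod_(i : I) P i (c i)) * (\sum_(i : I) F i (c i))
  = \sum_(i : I) \sum_(v : T) P i v * F i v.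
Proof.
move=> P1; under eq_bigr => c _ do rewrite big_distrr /=.
rewrite exchange_big /=; apply: eq_bigr => i _.
(* Folding [F i] into the [i]-th factor turns the sum over [c] into a product
   of one-dimensional sums, all but the [i]-th of which equal 1. *)
pose Q k v := P k v * (if k == i then F i v else 1).
transitivity (\sum_(c : {ffun I -> T}) \prod_(k : I) Q k (c k)).
  apply: eq_bigr => c _; rewrite (bigD1 i) //= [RHS](bigD1 i) //= /Q eqxx.
  rewrite -!mulrA; congr (_ * _); rewrite mulrC; congr (_ * _).
  by apply: eq_bigr => k /negbTE ->; rewrite mulr1.
rewrite -(bigA_distr_bigA Q) /= (bigD1 i) //= [X in _ * X]big1 ?mulr1.
  by apply: eq_bigr => v _; rewrite /Q eqxx.
by move=> k /negbTE ki; rewrite -[RHS](P1 k); apply: eq_bigr => v _; rewrite /Q ki mulr1.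
Qed.

Section OneCoordinate.
Variable R : realType.

Lemma mul_le_sqr_half_sum (u v : R) : u * v <= (u + v) ^+ 2 / 4.
Proof. by rewrite ler_pdivlMr //; have := sqr_ge0 (u - v); lra. Qed.

Lemma stochastic_rounding_sq_err (delta z x a : R) :
  0 < delta -> z <= x <= z + delta ->
  (x - z) / delta * (z + delta - a) ^+ 2 + (1 - (x - z) / delta) * (z - a) ^+ 2
  <= (x - a) ^+ 2 + delta ^+ 2 / 4.
Proof.
move=> delta_gt0 /andP[zx xz].
have -> : (x - z) / delta * (z + delta - a) ^+ 2
          + (1 - (x - z) / delta) * (z - a) ^+ 2
          = (x - a) ^+ 2 + (x - z) * (z + delta - x).
  by field; rewrite gt_eqF.
rewrite lerD2l; have := mul_le_sqr_half_sum (x - z) (z + delta - x).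
by congr (_ <= _); congr (_ ^+ 2 / _); ring.
Qed.

Lemma clamp_sq_err (lo hi x a : R) :
  lo <= a <= hi -> ~~ (lo <= x <= hi) ->
  ((if x < lo then lo else hi) - a) ^+ 2 <= (x - a) ^+ 2.
Proof.
move=> /andP[loa ahi] x_out; rewrite -[_ ^+ 2]sqrrN -[(x - a) ^+ 2]sqrrN !opprB.
case: ifP => [xlo | /negbT]; first by rewrite ler_sqr ?nnegrE; lra.
rewrite -leNgt => lox; move: x_out; rewrite lox /= -ltNge => hix.
by rewrite -sqrrN opprB -[(a - x) ^+ 2]sqrrN opprB ler_sqr ?nnegrE; lra.
Qed.

Variables (delta : R) (b : nat).
Hypothesis delta_gt0 : 0 < delta.

Lemma qfloor_le_lt (x : R) : qfloor delta x <= x < qfloor delta x + delta.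
Proof.
have x_eq : delta * (x / delta) = x by rewrite mulrC mulfVK // gt_eqF.
rewrite /qfloor -[X in _ <= X < _]x_eq -[X in _ < _ + X]mulr1 -mulrDr.
by rewrite ler_pM2l ?ltr_pM2l // -intrD1 floor_le floorD1_gt.
Qed.

Lemma qexpect_coord_sq_err (x a : R) :
  qmin delta b <= a <= qmax delta b ->
  qprob delta b x * (qhigh delta b x - a) ^+ 2
  + (1 - qprob delta b x) * (qlow delta b x - a) ^+ 2
  <= (x - a) ^+ 2 + delta ^+ 2 / 4.
Proof.
move=> a_in; rewrite /qprob /qhigh /qlow /inrange; case: ifP => x_in.
  apply: stochastic_rounding_sq_err => //.
  by have /andP[-> /ltW] := qfloor_le_lt x.
rewrite mul0r subr0 add0r mul1r.
have := clamp_sq_err _ _ x _ a_in (negbT x_in).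
have : 0 <= delta ^+ 2 / 4 by rewrite divr_ge0 ?sqr_ge0.
lra.
Qed.

End OneCoordinate.

Theorem lemma1 (R : realType) (d N : nat) (fs : 'I_N -> 'rV[R]_d -> R)
  (mu L delta : R) (b : nat) (wstar : 'rV[R]_d) :
  (0 < N)%N ->
  0 < mu ->
  (forall i x, differentiable (fs i) x) ->
  (forall i x y, enorm (grad (fs i) x - grad (fs i) y) <= L * enorm (x - y)) ->
  let f := fun w : 'rV[R]_d => N%:R^-1 * \sum_(i < N) fs i w in
  (forall x y, dotv (x - y) (grad f x - grad f y) >= mu * sqnorm (x - y)) ->
  (forall w, f wstar <= f w) ->
  0 < delta -> (0 < b)%N ->
  (forall j, qmin delta b <= wstar 0 j <= qmax delta b) ->
  forall w : 'rV[R]_d,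
    qexpect delta b w (fun q => sqnorm (q - wstar))
      <= sqnorm (w - wstar) + d%:R * delta ^+ 2 / 4.
Proof.
move=> _ _ _ _ f _ _ delta_gt0 _ wstar_in w.
pose P j (v : bool) :=
  if v then qprob delta b (w 0 j) else 1 - qprob delta b (w 0 j).
pose F j (v : bool) :=
  ((if v then qhigh delta b (w 0 j) else qlow delta b (w 0 j)) - wstar 0 j) ^+ 2.
have -> : qexpect delta b w (fun q => sqnorm (q - wstar))
          = \sum_(j < d) \sum_(v : bool) P j v * F j v.
  rewrite -expect_sum_product => [|j]; last by rewrite big_bool /= subrKC.
  apply: eq_bigr => c _; congr (_ * _); apply: eq_bigr => j _.
  by rewrite /F !mxE -expr2; case: (c j).
have -> : d%:R * delta ^+ 2 / 4 = \sum_(j < d) delta ^+ 2 / 4.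
  by rewrite sumr_const card_ord -mulrA mulr_natl.
rewrite /sqnorm /dotv -big_split.
apply: ler_sum => j _; rewrite big_bool /P /F /= !mxE -expr2.
exact: qexpect_coord_sq_err.
Qed.
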